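(* For an integer $p\ge4$, let $G^I_p$ be the graph with vertex set $\{v_0,\dots,v_{p-1}\}$ and edge set $\{v_0v_3\}\cup\{v_iv_{i+1}: 0\le i\le p-2\}\cup\{v_iv_{i+2}:0\le i\le p-3\}$. If $p=4q+4$ with $q$ a nonnegative integer, then the contracted solution graph $\mathcal{C}^c_4(G^I_p,\{v_{p-2},v_{p-1}\})$ has (at least) $4!$ components each having at least $2^q$ nodes.
   Context: A $k$-coloring of $G$ is a map $\alpha:V(G)\to\{1,\dots,k\}$ with $\alpha(u)\ne\alpha(v)$ for all edges $uv$. The $k$-color graph $\mathcal{C}_k(G)$ has the $k$-colorings of $G$ as nodes, two adjacent iff they differ on exactly one vertex. For $T\subseteq V(G)$, each $k$-coloring $\gamma$ gets label $\gamma|_T$; a label component is a maximal set of $k$-colorings with the same label inducing a connected subgraph of $\mathcal{C}_k(G)$. The contracted solution graph $\mathcal{C}^c_k(G,T)$ is the labeled graph whose nodes correspond bijectively to the label components, distinct nodes adjacent iff some coloring in one component is adjacent in $\mathcal{C}_k(G)$ to some coloring in the other, each node labeled with the common label of its component. *)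

From mathcomp Require Import all_boot.
Set Implicit Arguments. Unset Strict Implicit. Unset Printing Implicit Defensive.

Section Recolouring.
Variables (n k : nat) (E : rel 'I_n) (T : {set 'I_n}).

Definition coloring := {ffun 'I_n -> 'I_k}.

Definition proper (c : coloring) : bool :=
  [forall u, forall v, E u v ==> (c u != c v)].

Definition cadj (a b : coloring) : bool :=
  [&& proper a, proper b & #|[set v | a v != b v]| == 1].

Definition same_label (a b : coloring) : bool := [forall x in T, a x == b x].

Definition lrel (a b : coloring) : bool := cadj a b && same_label a b.

Definition lcomp (a : coloring) : {set coloring} := [set b | connect lrel a b].

Definition cnodes : {set {set coloring}} :=
  [set lcomp a | a in [set c : coloring | proper c]].

Definition cgadj (N M : {set coloring}) : bool :=
  [&& N \in cnodes, M \in cnodes, N != M &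
      [exists a in N, exists b in M, cadj a b]].

Definition ccomp (N : {set coloring}) : {set {set coloring}} :=
  [set M in cnodes | connect cgadj N M].

End Recolouring.

(* the graph G^I_p on vertices v_0..v_{p-1} (v_i = i : 'I_p) *)
Definition GI_edge (p : nat) : rel 'I_p := fun u v =>
  let i := nat_of_ord u in let j := nat_of_ord v in
  [|| (i == 0) && (j == 3), (j == 0) && (i == 3),
      j == i.+1, i == j.+1, j == i.+2 | i == j.+2].

Definition GI_T (p : nat) : {set 'I_p} := [set x : 'I_p | p - 2 <= x].

Arguments proper : clear implicits.
Arguments cadj : clear implicits.
Arguments lcomp : clear implicits.
Arguments cnodes : clear implicits.
Arguments cgadj : clear implicits.
Arguments ccomp : clear implicits.
Arguments GI_edge : clear implicits.
Arguments GI_T : clear implicits.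

(* The vertices v0, ..., v3 span a K4, so in a 4-coloring each of them sees
   three distinct colors and can never be recolored: the coloring of v0..v3, a
   bijection onto the 4 colors, is invariant along C_4(G) and hence along the
   contracted graph, which gives 4! distinct components.  Conversely, two
   4-colorings agreeing on v0..v3 are joined in C_4(G): fold the tail of the
   path onto its last triangle and recolor one more vertex at a time.  Finally,
   coloring each block {v_4m, ..., v_4m+3} with m >= 1 by 0,1,2,3 or 0,1,3,2
   gives 2^q colorings in which every vertex outside T sees three distinct
   colors; these colorings are frozen, hence singleton label components, and
   they all lie in one component of the contracted graph. *)

From mathcomp Require Import all_boot perm zify.
Set Implicit Arguments. Unset Strict Implicit. Unset Printing Implicit Defensive.

Section Recoloring.
Variables (n k : nat) (E : rel 'I_n) (T : {set 'I_n}).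

Local Notation coloring := (coloring n k).
Local Notation proper := (proper n k E).
Local Notation cadj := (cadj n k E).
Local Notation lcomp := (lcomp n k E T).
Local Notation cnodes := (cnodes n k E T).
Local Notation cgadj := (cgadj n k E T).
Local Notation ccomp := (ccomp n k E T).

Lemma properP (c : coloring) :
  reflect (forall u v, E u v -> c u != c v) (proper c).
Proof.
apply: (iffP forallP) => [H u v | H u]; first by move/forallP/(_ v)/implyP: (H u).
by apply/forallP => v; apply/implyP/H.
Qed.

Lemma proper_comp (c : coloring) (f : 'I_n -> 'I_n) :
  {homo f : u v / E u v} -> proper c -> proper [ffun i => c (f i)].
Proof.
move=> fE /properP pc; apply/properP => u v uv; rewrite !ffunE; exact/pc/fE.
Qed.

Definition recolor (c : coloring) (x : 'I_n) (col : 'I_k) : coloring :=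
  [ffun y => if y == x then col else c y].

Lemma proper_recolor (c : coloring) x col : proper c ->
  (forall y, E x y || E y x -> c y != col) -> proper (recolor c x col).
Proof.
move=> /properP pc hx; apply/properP => u v uv; rewrite !ffunE.
have [ux|ux] := eqVneq u x; have [vx|vx] := eqVneq v x.
- by have := pc u v uv; rewrite ux vx eqxx.
- by rewrite eq_sym; apply: hx; rewrite -ux uv.
- by apply: hx; rewrite -vx uv orbT.
- exact: pc.
Qed.

Lemma connect_cadj_recolor (c : coloring) x col : proper c ->
  proper (recolor c x col) -> connect cadj c (recolor c x col).
Proof.
move=> pc pc'; have [<-|cx] := eqVneq (c x) col.
  rewrite (_ : recolor c x (c x) = c); first exact: connect0.
  by apply/ffunP => y; rewrite ffunE; case: eqVneq => [->|].
apply: connect1; rewrite /cadj pc pc'; apply/cards1P; exists x.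
apply/setP => y; rewrite !inE ffunE.
by case: (eqVneq y x) => [->|]; rewrite ?eqxx.
Qed.

Lemma cadj_irr (a : coloring) : cadj a a = false.
Proof.
apply/negbTE/and3P => -[_ _ /cards1P [v /setP /(_ v)]].
by rewrite !inE !eqxx.
Qed.

Lemma cadj_eq_off (a b : coloring) x y :
  cadj a b -> a x != b x -> y != x -> a y = b y.
Proof.
case/and3P=> _ _ /cards1P [z Dz] abx yx.
have diffE v : (a v != b v) = (v == z) by rewrite -in_set1 -Dz inE.
apply/eqP; apply: contraNT yx; rewrite diffE => /eqP->.
by rewrite eq_sym -diffE.
Qed.

(* If [x] changed, [a x], [b x] and the colors on [s], which [b] keeps, would
   be [(size s).+2] distinct colors. *)
Lemma cadj_frozen (a b : coloring) x (s : seq 'I_n) :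
  cadj a b -> all (E x) s -> uniq (map a s) -> k <= (size s).+1 -> a x = b x.
Proof.
move=> ab /allP Exs uas ksz; case/and3P: (ab) => /properP pa /properP pb _.
apply/eqP/negPn/negP => abx.
have bs y : y \in s -> a y = b y.
  move=> ys; apply: cadj_eq_off ab abx _.
  by have := pa x y (Exs y ys); apply: contraNneq => ->.
have U : uniq (a x :: b x :: map a s).
  rewrite /= uas inE negb_or abx /= andbT.
  apply/andP; split; apply/mapP => -[y ys].
    exact/eqP/pa/Exs.
  by rewrite bs //; apply/eqP/pb/Exs.
have := max_card (mem (a x :: b x :: map a s)).
by rewrite (card_uniqP U) card_ord /= size_map ltnNge ksz.
Qed.

Lemma lcomp_id (a : coloring) : a \in lcomp a.
Proof. by rewrite inE connect0. Qed.

Lemma lcomp_cnodes (a : coloring) : proper a -> lcomp a \in cnodes.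
Proof. by move=> pa; apply/imsetP; exists a; rewrite ?inE. Qed.

Lemma connect_cadj_cgadj (a b : coloring) : proper a ->
  connect cadj a b -> connect cgadj (lcomp a) (lcomp b).
Proof.
move=> pa /connectP [s]; elim: s a pa => [|c s IHs] a pa /=; first by move=> _ ->.
case/andP=> ac cs lb; case/and3P: (ac) => _ pc _.
apply: connect_trans (IHs c pc cs lb).
have [->|acN] := eqVneq (lcomp a) (lcomp c); first exact: connect0.
apply: connect1; rewrite /cgadj !lcomp_cnodes // acN.
by apply/existsP; exists a; rewrite lcomp_id /=; apply/existsP; exists c; rewrite lcomp_id.
Qed.

Section Invariant.
Variables (X : Type) (phi : coloring -> X).
Hypothesis phi_cadj : forall a b, cadj a b -> phi a = phi b.

Lemma lcomp_invariant (a b : coloring) : b \in lcomp a -> phi b = phi a.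
Proof.
rewrite inE => /connectP [s]; elim: s a => [|c s IHs] a /=; first by move=> _ ->.
by case/andP => /andP [/phi_cadj-> _] cs /(IHs c cs).
Qed.

Lemma ccomp_invariant (a c : coloring) M :
  M \in ccomp (lcomp a) -> c \in M -> phi c = phi a.
Proof.
rewrite inE => /andP [_ /connectP [s]].
elim: s (lcomp a) (@lcomp_invariant a) => [|N s IHs] L HL /=; first by move=> _ -> /HL.
case/andP => /and4P [_ /imsetP [d _ DN] _] /existsP [b /andP [bL]].
case/existsP => e /andP [eN /phi_cadj be] Ns lM.
apply: IHs Ns lM => f; move: eN; rewrite DN => ed fd.
by rewrite (lcomp_invariant fd) -(lcomp_invariant ed) -be HL.
Qed.

End Invariant.
End Recoloring.

Definition gi_adj (i j : nat) : bool :=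
  [|| (i == 0) && (j == 3), (j == 0) && (i == 3),
      j == i.+1, i == j.+1, j == i.+2 | i == j.+2].

Lemma GI_edgeE p (u v : 'I_p) : GI_edge p u v = gi_adj u v.
Proof. by []. Qed.

Lemma gi_adjP i j : gi_adj i j <->
  (i = 0 /\ j = 3 \/ j = 0 /\ i = 3 \/ j = i.+1 \/ i = j.+1 \/ j = i.+2 \/ i = j.+2).
Proof.
split => [|[[-> ->]|[[-> ->]|[->|[->|[->|->]]]]]]; rewrite /gi_adj ?eqxx ?orbT //.
by case/or4P => [/andP [/eqP-> /eqP->]|/andP [/eqP-> /eqP->]|/eqP->|/or3P [/eqP->|/eqP->|/eqP->]];
  lia.
Qed.

Lemma gi_adj_irr i : gi_adj i i = false.
Proof. by apply/negP => /gi_adjP; lia. Qed.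

Lemma gi_adj_sym i j : gi_adj i j = gi_adj j i.
Proof. by apply/idP/idP => /gi_adjP ij; apply/gi_adjP; lia. Qed.

Lemma gi_adj_near i j : i != j -> i <= j.+2 -> j <= i.+2 -> gi_adj i j.
Proof. by move=> ij ji2 ij2; apply/gi_adjP; lia. Qed.

(* Winds the vertices beyond [s] periodically around the triangle
   [s-2, s-1, s]: a retraction of G^I onto its prefix [0, s]. *)
Definition fold_tail (s i : nat) : nat := if i <= s then i else s - 2 + (i + 2 - s) %% 3.

Lemma fold_tail_id s i : i <= s -> fold_tail s i = i.
Proof. by rewrite /fold_tail => ->. Qed.

Lemma fold_tail_le s i : 2 <= s -> fold_tail s i <= minn i s.
Proof. by rewrite /fold_tail; case: ifP; lia. Qed.

Lemma fold_tail_adj s i j : 3 <= s -> gi_adj i j -> gi_adj (fold_tail s i) (fold_tail s j).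
Proof. by move=> s3 /gi_adjP ij; apply/gi_adjP; rewrite /fold_tail; do ?case: ifP; lia. Qed.

(* Block [m] = {4m, ..., 4m+3} is colored 0,1,2,3, or 0,1,3,2 when [F m]. *)
Definition flip_pattern (F : pred nat) (i : nat) : nat :=
  let r := i %% 4 in if (1 < r) && F (i %/ 4) then 5 - r else r.

Lemma flip_pattern_lt4 F i : flip_pattern F i < 4.
Proof. by rewrite /flip_pattern; case: ifP; lia. Qed.

Lemma flip_pattern_small F i : ~~ F 0 -> i < 4 -> flip_pattern F i = i.
Proof.
move=> F0 i4; rewrite /flip_pattern (divn_small i4) (negbTE F0) andbF.
exact: modn_small.
Qed.

Lemma flip_pattern_adj F i j : gi_adj i j -> flip_pattern F i != flip_pattern F j.
Proof.
move/gi_adjP => ij; rewrite /flip_pattern.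
have [-> | /eqP ne] := eqVneq (i %/ 4) (j %/ 4).
  by case: (F _); rewrite ?andbT ?andbF; do ?case: ifP; lia.
by case: (F _); case: (F _); rewrite ?andbT ?andbF; do ?case: ifP; lia.
Qed.

Lemma flip_pattern_shift3 F j :
  (flip_pattern F j != flip_pattern F j.+3) || (flip_pattern F j.+1 != flip_pattern F j.+4).
Proof.
rewrite /flip_pattern.
case: (F (j %/ 4)); case: (F (j.+3 %/ 4)); case: (F (j.+1 %/ 4)); case: (F (j.+4 %/ 4));
  rewrite ?andbT ?andbF; do ?case: ifP; lia.
Qed.

Definition block_flips q (A : {set 'I_q}) : pred nat := fun m => [exists k in A, k.+1 == m].

Lemma block_flips0 q (A : {set 'I_q}) : ~~ block_flips A 0.
Proof. by apply/existsP => -[k /andP [_]]. Qed.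

Lemma block_flipsS q (A : {set 'I_q}) (k : 'I_q) : block_flips A k.+1 = (k \in A).
Proof.
apply/existsP/idP => [[l /andP [lA /eqP [kl]]]|kA]; last by exists k; rewrite kA eqxx.
by rewrite (_ : k = l) //; apply: val_inj.
Qed.

Section GIGraph.
Variable n : nat.

Local Notation G := (GI_edge n.+1).
Local Notation coloring := (coloring n.+1 4).
Local Notation proper := (proper n.+1 4 G).
Local Notation cadj := (cadj n.+1 4 G).
Local Notation lcomp := (lcomp n.+1 4 G (GI_T n.+1)).
Local Notation ccomp := (ccomp n.+1 4 G (GI_T n.+1)).

Lemma GI_edge_inord i j : i <= n -> j <= n -> G (inord i) (inord j) = gi_adj i j.
Proof. by move=> ni nj; rewrite GI_edgeE !inordK. Qed.

Lemma proper_inord (c : coloring) i j : proper c -> i <= n -> j <= n ->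
  gi_adj i j -> c (inord i) != c (inord j).
Proof. by move=> /properP pc ni nj ij; apply: pc; rewrite GI_edge_inord. Qed.

Lemma cadj_frozen3 (a b : coloring) (x : 'I_n.+1) u v w : cadj a b ->
  [&& u <= n, v <= n & w <= n] -> [&& gi_adj x u, gi_adj x v & gi_adj x w] ->
  uniq [:: a (inord u); a (inord v); a (inord w)] -> a x = b x.
Proof.
move=> ab /and3P [nu nv nw] adj uvw.
apply: (cadj_frozen (E := G) (s := [:: inord u; inord v; inord w])) => //=.
by rewrite -[x]inord_val !GI_edge_inord ?andbT // -ltnS.
Qed.

Lemma cadj_K4 (a b : coloring) (x : 'I_n.+1) : 3 <= n -> cadj a b -> x < 4 -> a x = b x.
Proof.
move=> n3 ab x4; case/and3P: (ab) => pa _ _.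
have d i j : i < 4 -> j < 4 -> i != j -> a (inord i) != a (inord j).
  move=> i4 j4 ij; apply: proper_inord => //; try lia.
  by apply/gi_adjP; lia.
have frozen u v w : [&& u < 4, v < 4 & w < 4] ->
    [&& x != u :> nat, x != v :> nat & x != w :> nat] -> [&& u != v, u != w & v != w] ->
    a x = b x.
  move=> /and3P [u4 v4 w4] /and3P [xu xv xw] /and3P [uv uw vw].
  apply: (cadj_frozen3 (u := u) (v := v) (w := w) ab); first by apply/and3P; split; lia.
    by apply/and3P; split; apply/gi_adjP; lia.
  by rewrite /= !inE !negb_or !d.
have : x = 0 :> nat \/ x = 1 :> nat \/ x = 2 :> nat \/ x = 3 :> nat by lia.
case=> [|[|[|]]] x_val.
- by apply: (frozen 1 2 3); rewrite ?x_val.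
- by apply: (frozen 0 2 3); rewrite ?x_val.
- by apply: (frozen 0 1 3); rewrite ?x_val.
- by apply: (frozen 0 1 2); rewrite ?x_val.
Qed.

Definition K4_colors (c : coloring) : {ffun 'I_4 -> 'I_4} := [ffun j : 'I_4 => c (inord j)].

Lemma K4_colors_cadj : 3 <= n -> forall a b : coloring, cadj a b -> K4_colors a = K4_colors b.
Proof.
move=> n3 a b ab; apply/ffunP => j; rewrite !ffunE.
by apply: cadj_K4; rewrite // inordK //; have := ltn_ord j; lia.
Qed.

(* [x-2, x-1, x+1] and [x-1, x+1, x+2] are neighbors of [x], pairwise adjacent
   except for the distance-3 pair. *)
Lemma cadj_interior (a b : coloring) (x : 'I_n.+1) : cadj a b -> 2 <= x -> x.+2 <= n ->
  (a (inord (x - 2)) != a (inord x.+1)) || (a (inord x.-1) != a (inord x.+2)) ->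
  a x = b x.
Proof.
move=> ab x2 xn; case/and3P: (ab) => pa _ _.
have d i j : i <= n -> j <= n -> i != j -> i <= j.+2 -> j <= i.+2 ->
    a (inord i) != a (inord j).
  by move=> ni nj ij ij2 ji2; apply: proper_inord => //; apply: gi_adj_near.
case/orP => far.
- apply: (cadj_frozen3 (u := x - 2) (v := x.-1) (w := x.+1) ab).
  + by apply/and3P; split; lia.
  + by apply/and3P; split; apply: gi_adj_near; lia.
  + by rewrite /= !inE !negb_or far !d //; lia.
- apply: (cadj_frozen3 (u := x.-1) (v := x.+1) (w := x.+2) ab).
  + by apply/and3P; split; lia.
  + by apply/and3P; split; apply: gi_adj_near; lia.
  + by rewrite /= !inE !negb_or far !d //; lia.
Qed.

Definition fold_coloring (s : nat) (a : coloring) : coloring :=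
  [ffun i : 'I_n.+1 => a (inord (fold_tail s i))].

Lemma fold_coloring_proper s a : 3 <= s -> proper a -> proper (fold_coloring s a).
Proof.
move=> s3; apply: proper_comp => u v; rewrite !GI_edgeE.
have le (w : 'I_n.+1) : fold_tail s w <= n.
  by have := fold_tail_le w (ltnW s3); have := ltn_ord w; lia.
by rewrite !inordK ?ltnS ?le //; exact: fold_tail_adj s3.
Qed.

Lemma fold_coloring_prefix s a (i : 'I_n.+1) : i <= s -> fold_coloring s a i = a i.
Proof. by move=> i_s; rewrite ffunE fold_tail_id ?inord_val. Qed.

Lemma proper_recolor_fold s (a b : coloring) : 3 <= s <= n -> proper a -> proper b ->
  (forall i : 'I_n.+1, i < s -> a i = b i) ->
  proper (recolor (fold_coloring s a) (inord s) (b (inord s))).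
Proof.
move=> /andP [s3 sn] pa pb ab; apply: proper_recolor (fold_coloring_proper s3 pa) _ => y.
rewrite !GI_edgeE inordK // [gi_adj y s]gi_adj_sym orbb => sy; rewrite ffunE.
set t := fold_tail s y.
have ts : gi_adj s t by have := fold_tail_adj s3 sy; rewrite fold_tail_id.
have ts' : t < s.
  rewrite ltn_neqAle; have := fold_tail_le y (ltnW s3); rewrite leq_min => /andP [_ ->].
  by rewrite andbT; apply: contraTneq ts => ->; rewrite gi_adj_irr.
rewrite ab ?inordK; try lia.
by rewrite eq_sym; apply: proper_inord; rewrite // 1?gi_adj_sym //; lia.
Qed.

(* Induction on the disagreeing suffix: fold [a] onto its prefix [0, m] and
   recolor vertex [m] to [b m]; both steps preserve agreement up to [m]. *)
Lemma connect_cadj_prefix m (a b : coloring) : 4 <= m -> proper a -> proper b ->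
  (forall i : 'I_n.+1, i < m -> a i = b i) -> connect cadj a b.
Proof.
move=> m4; have [d] := ubnP (n.+1 - m); elim: d m m4 a b => // d IHd m m4 a b dm pa pb ab.
have [mn|nm] := leqP m n; last first.
  rewrite (_ : a = b); first exact: connect0.
  by apply/ffunP => i; apply: ab; have := ltn_ord i; lia.
have IH c e : proper c -> proper e -> (forall i : 'I_n.+1, i <= m -> c i = e i) ->
    connect cadj c e.
  by move=> pc pe ce; apply: (IHd m.+1) => //; lia.
have m3 : 3 <= m <= n by rewrite mn; lia.
have pa' := fold_coloring_proper (ltnW m4) pa.
have pa'' := proper_recolor_fold m3 pa pb ab.
apply: connect_trans (IH _ _ pa pa' _) _ => [i im|]; first by rewrite fold_coloring_prefix.
apply: connect_trans (connect_cadj_recolor pa' pa'') (IH _ _ pa'' pb _) => i im.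
rewrite ffunE; case: eqVneq => [->|ne]; first by [].
rewrite fold_coloring_prefix // ab //; rewrite ltn_neqAle im andbT.
by apply: contra ne => /eqP im'; apply/eqP/val_inj; rewrite /= inordK.
Qed.

Lemma connect_cadj_K4_colors (a b : coloring) : proper a -> proper b ->
  K4_colors a = K4_colors b -> connect cadj a b.
Proof.
move=> pa pb ab; apply: (connect_cadj_prefix (m := 4)) => // i i4.
by have := congr1 (fun f : {ffun 'I_4 -> 'I_4} => f (inord i)) ab; rewrite !ffunE inordK // inord_val.
Qed.

Definition block_coloring (s : {perm 'I_4}) (F : pred nat) : coloring :=
  [ffun i : 'I_n.+1 => s (inord (flip_pattern F i))].

Lemma block_coloring_eq s F F' (u v : 'I_n.+1) :
  (block_coloring s F u == block_coloring s F' v) = (flip_pattern F u == flip_pattern F' v).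
Proof. by rewrite !ffunE (inj_eq perm_inj) -val_eqE /= !inordK ?flip_pattern_lt4. Qed.

Lemma block_coloring_proper s F : proper (block_coloring s F).
Proof.
apply/properP => u v; rewrite GI_edgeE block_coloring_eq; exact: flip_pattern_adj.
Qed.

Lemma block_coloring_frozen s F (b : coloring) (x : 'I_n.+1) : 3 <= n -> x.+2 <= n ->
  cadj (block_coloring s F) b -> block_coloring s F x = b x.
Proof.
move=> n3 xn ab; have [x4|x4] := ltnP x 4; first exact: cadj_K4.
apply: cadj_interior => //; first lia.
rewrite !block_coloring_eq !inordK; try lia.
have [j ->] : exists j, x = j.+2 :> nat by exists (x - 2); lia.
by rewrite subSS subn1; exact: flip_pattern_shift3.
Qed.

Lemma lcomp_block_coloring s F : 3 <= n ->
  lcomp (block_coloring s F) = [set block_coloring s F].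
Proof.
move=> n3; apply/setP => c; rewrite !inE; apply/idP/eqP => [|->]; last exact: connect0.
case/connectP => [[|d r]] /=; first by move=> _ ->.
case/andP => /andP [ad sl] _ _.
suff Dd : block_coloring s F = d by rewrite -Dd cadj_irr in ad.
apply/ffunP => x; have [xn|xT] := leqP x.+2 n; first exact: block_coloring_frozen.
move/forallP/(_ x)/implyP: sl; rewrite inE => sl; apply/eqP/sl; lia.
Qed.

Lemma block_coloring_inj s F F' m : block_coloring s F = block_coloring s F' ->
  4 * m + 2 <= n -> F m = F' m.
Proof.
move=> eF mn; move/eqP: (congr1 (fun c : coloring => c (inord (4 * m + 2))) eF).
rewrite block_coloring_eq inordK // /flip_pattern.
have -> : (4 * m + 2) %% 4 = 2 by lia.
have -> : (4 * m + 2) %/ 4 = m by lia.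
by case: (F m); case: (F' m).
Qed.

Lemma K4_colors_block_coloring s F : 3 <= n -> ~~ F 0 ->
  K4_colors (block_coloring s F) = [ffun j => s j].
Proof.
move=> n3 F0; apply/ffunP => j.
by rewrite !ffunE inordK ?flip_pattern_small ?inord_val //; have := ltn_ord j; lia.
Qed.

Lemma block_coloring_flips_inj q s (A B : {set 'I_q}) : 4 * q + 2 <= n ->
  block_coloring s (block_flips A) = block_coloring s (block_flips B) -> A = B.
Proof.
move=> qn eAB; apply/setP => k; rewrite -!block_flipsS.
by apply: block_coloring_inj eAB _; have := ltn_ord k; lia.
Qed.

Lemma ccomp_block_coloring_perm s t F F' : 3 <= n -> ~~ F 0 -> ~~ F' 0 ->
  lcomp (block_coloring s F) \in ccomp (lcomp (block_coloring t F')) -> s = t.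
Proof.
move=> n3 F0 F0' st; apply/permP => j.
have := ccomp_invariant (K4_colors_cadj n3) st (lcomp_id _ _ _).
by rewrite !K4_colors_block_coloring // => /ffunP /(_ j); rewrite !ffunE.
Qed.

Lemma lcomp_block_coloring_ccomp s F F' : 3 <= n -> ~~ F 0 -> ~~ F' 0 ->
  lcomp (block_coloring s F) \in ccomp (lcomp (block_coloring s F')).
Proof.
move=> n3 F0 F0'; rewrite inE lcomp_cnodes ?block_coloring_proper //=.
apply: connect_cadj_cgadj (block_coloring_proper _ _) _.
by apply: connect_cadj_K4_colors; rewrite ?block_coloring_proper // !K4_colors_block_coloring.
Qed.

End GIGraph.

Theorem proposition5 (p q : nat) :
  p = 4 * q + 4 ->
  exists C : {set {set {set {ffun 'I_p -> 'I_4}}}},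
    4`! <= #|C| /\
    forall K, K \in C ->
      (exists2 N, N \in cnodes p 4 (GI_edge p) (GI_T p) & K = ccomp p 4 (GI_edge p) (GI_T p) N)
      /\ 2 ^ q <= #|K|.
Proof.
move=> ->; have -> : 4 * q + 4 = (4 * q + 3).+1 by rewrite addnS.
set n := 4 * q + 3; have n3 : 3 <= n by rewrite /n; lia.
pose node (s : {perm 'I_4}) (A : {set 'I_q}) :=
  lcomp n.+1 4 (GI_edge n.+1) (GI_T n.+1) (block_coloring n s (block_flips A)).
exists [set ccomp n.+1 4 (GI_edge n.+1) (GI_T n.+1) (node s set0) | s : {perm 'I_4}].
split=> [|_ /imsetP [s _ ->]].
  rewrite card_imset ?card_Sn // => s t e.
  have F0 := block_flips0 (set0 : {set 'I_q}).
  apply: (ccomp_block_coloring_perm n3 F0 F0).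
  by rewrite -e inE lcomp_cnodes ?block_coloring_proper ?connect0.
split; first by exists (node s set0); rewrite ?lcomp_cnodes ?block_coloring_proper.
have sub : [set node s A | A in powerset [set: 'I_q]] \subset
    ccomp n.+1 4 (GI_edge n.+1) (GI_T n.+1) (node s set0).
  by apply/subsetP => _ /imsetP [A _ ->]; apply: lcomp_block_coloring_ccomp; rewrite ?block_flips0.
apply: leq_trans (subset_leq_card sub).
rewrite card_in_imset ?card_powerset ?cardsT ?card_ord // => A B _ _.
rewrite /node !lcomp_block_coloring // => /set1_inj.
by apply: block_coloring_flips_inj; rewrite /n; lia.
Qed.
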